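(* Let $R$ be a commutative ring with identity and $M$ a non-zero comultiplication $R$-module with $G'(M)$ non-null. Then the domination number satisfies $\gamma(G'(M))\le 2$. In particular, if $|\mathrm{Min}(M)|<\infty$, then $\gamma(G'(M))=2$.
   Context: An $R$-module $M$ is a comultiplication module if for every submodule $N$ of $M$ there is an ideal $I$ of $R$ with $N=\mathrm{Ann}_M(I)$. A submodule $N$ of $M$ is large if $N\cap L\neq 0$ for every non-zero submodule $L$ of $M$. $\mathrm{Min}(M)$ is the set of minimal submodules of $M$. The large sum graph $G'(M)$ has as vertex set the set of all non-zero non-large submodules of $M$, and two distinct vertices $N,K$ are adjacent iff $N+K$ is non-large in $M$. A set $S$ of vertices is dominating if every vertex lies in $S$ or is adjacent to a vertex of $S$; $\gamma(G)$ is the minimum cardinality of a dominating set. *)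

From HB Require Import structures.
From Stdlib Require Import List.
From mathcomp Require Import all_boot all_order all_algebra.
Set Implicit Arguments. Unset Strict Implicit. Unset Printing Implicit Defensive.
Import GRing.Theory.
Local Open Scope ring_scope.

Section ModuleDefs.
Variables (R : comPzRingType) (M : lmodType R).

Definition msub := M -> Prop.

Definition is_submodule (N : msub) : Prop :=
  [/\ N 0, (forall x y, N x -> N y -> N (x + y)) & (forall (r : R) x, N x -> N (r *: x))].

Definition is_ideal (I : R -> Prop) : Prop :=
  [/\ I 0, (forall a b, I a -> I b -> I (a + b)) & (forall r a, I a -> I (r * a))].

Definition msub_eq (N K : msub) : Prop := forall x, N x <-> K x.
Definition msub_le (N K : msub) : Prop := forall x, N x -> K x.

Definition AnnM (I : R -> Prop) : msub := fun m => forall r, I r -> r *: m = 0.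

Definition comultiplication_module : Prop :=
  forall N, is_submodule N -> exists I, is_ideal I /\ msub_eq N (AnnM I).

Definition zero_msub (N : msub) : Prop := forall x, N x -> x = 0.

Definition nonzero_module : Prop := exists x : M, x <> 0.

Definition msum (N K : msub) : msub := fun x => exists n k, N n /\ K k /\ x = n + k.

Definition large (N : msub) : Prop :=
  forall L, is_submodule L -> ~ zero_msub L -> exists x, x <> 0 /\ N x /\ L x.

Definition minimal_submodule (N : msub) : Prop :=
  [/\ is_submodule N, ~ zero_msub N &
      forall K, is_submodule K -> msub_le K N -> zero_msub K \/ msub_eq K N].

(* Min(M) is finite: finitely many minimal submodules up to equality *)
Definition Min_finite : Prop :=
  exists l : seq msub, forall N, minimal_submodule N -> exists2 K, List.In K l & msub_eq N K.

Definition lsg_vertex (N : msub) : Prop :=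
  [/\ is_submodule N, ~ zero_msub N & ~ large N].

Definition lsg_adj (N K : msub) : Prop :=
  [/\ lsg_vertex N, lsg_vertex K, ~ msub_eq N K & ~ large (msum N K)].

Definition lsg_nonnull : Prop := exists N K, lsg_adj N K.

(* S (given as a list, possibly with repetitions) is a dominating set of G'(M) *)
Definition lsg_dominating (S : seq msub) : Prop :=
  (forall N, List.In N S -> lsg_vertex N) /\
  (forall V, lsg_vertex V -> exists2 N, List.In N S & (msub_eq V N \/ lsg_adj V N)).

Definition lsg_gamma_le (k : nat) : Prop :=
  exists S, lsg_dominating S /\ (size S <= k)%N.

Definition lsg_gamma_eq (k : nat) : Prop :=
  lsg_gamma_le k /\ forall S, lsg_dominating S -> (k <= size S)%N.

End ModuleDefs.

(* Let N be a vertex.  It misses some non-zero submodule L, and L contains a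
   minimal submodule S: for 0 <> x in L and a maximal ideal m above Ann(x),
   comultiplication writes mx = Ann_M(I), and any r in I with rx <> 0 spans a
   simple submodule R(rx), because m(rx) = 0.  The pair {N, S} dominates: if
   V + N and V + S were both large, S would meet V + N in some v + n <> 0,
   which lies outside N = Ann_M(J), so some a in J maps it to a non-zero
   av in V \cap S; then S <= V by minimality and V = V + S would be large.
   No single vertex D dominates, since a submodule V maximal with
   V \cap D = 0 is a vertex, distinct from D, with V + D large. *)
From mathcomp Require Import all_boot all_order all_algebra.
From mathcomp Require Import boolp classical_sets.
Set Implicit Arguments. Unset Strict Implicit. Unset Printing Implicit Defensive.
Import GRing.Theory.
Local Open Scope classical_set_scope.
Local Open Scope ring_scope.

Lemma zorn_above (T : Type) (Q : set T -> Prop) (A0 : set T) :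
  Q A0 ->
  (forall F : set (set T), F `<=` Q -> total_on F subset -> F !=set0 ->
     Q (\bigcup_(X in F) X)) ->
  exists A, [/\ Q A, A0 `<=` A & forall B, A `<=` B -> Q B -> B `<=` A].
Proof.
move=> QA0 Qchain.
(* Zorn's lemma for sets X with Q (X `|` A0) also covers the empty chain. *)
have [A [QA Amax]] : exists A, Q (A `|` A0) /\ forall B, A `<` B -> ~ Q (B `|` A0).
  apply: (Zorn_bigcup (P := fun X => Q (X `|` A0))) => F FQ Ftot.
  have [[X FX]|F0] := pselect (F !=set0); last first.
    suff -> : F = set0 by rewrite bigcup_set0 set0U.
    by apply/seteqP; split=> // X FX; apply: F0; exists X.
  rewrite setUC -bigcupUr; last by exists X.
  under eq_bigcupr do rewrite setUC.
  rewrite -(bigcup_image F (fun X => X `|` A0) id).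
  apply: Qchain; first by move=> _ [Y FY <-]; exact: FQ.
  - move=> _ _ [Y FY <-] [Z FZ <-].
    by case: (Ftot Y Z FY FZ) => YZ; [left|right]; exact: setSU.
  - by exists (X `|` A0), X.
exists (A `|` A0); split => // B AB QB.
have [BA|nBA] := pselect (B `<=` A); first by move=> x /BA; left.
exfalso; apply: (Amax B); first by split => // x Ax; apply: AB; left.
by rewrite setUidl // => x A0x; apply: AB; right.
Qed.

Section Ideals.
Variable R : comPzRingType.
Implicit Types (I m : R -> Prop) (a c : R).

Lemma is_ideal_bigcup (F : set (R -> Prop)) :
  F `<=` @is_ideal R -> total_on F subset -> F !=set0 ->
  is_ideal (\bigcup_(I in F) I).
Proof.
move=> FI Ftot [I0 FI0]; split.
- by exists I0 => //; case: (FI I0 FI0).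
- move=> a b [I FI' Ia] [J FJ Jb].
  have [IJ|JI] := Ftot I J FI' FJ.
  + by exists J => //; case: (FI J FJ) => _ + _; apply => //; exact: IJ.
  + by exists I => //; case: (FI I FI') => _ + _; apply => //; exact: JI.
- by move=> r a [I FI' Ia]; exists I => //; case: (FI I FI') => _ _; apply.
Qed.

Lemma is_ideal_addMr I c :
  is_ideal I -> is_ideal (fun t => exists a r, I a /\ t = a + r * c).
Proof.
case=> I0 ID IM; split.
- by exists 0, 0; rewrite mul0r addr0.
- move=> _ _ [a [r [Ia ->]]] [b [s [Ib ->]]].
  by exists (a + b), (r + s); rewrite mulrDl addrACA; split => //; exact: ID.
- move=> t _ [a [r [Ia ->]]].
  by exists (t * a), (t * r); rewrite mulrDr mulrA; split => //; exact: IM.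
Qed.

Lemma ex_maximal_ideal_above I :
  is_ideal I -> ~ I 1 ->
  exists m, [/\ is_ideal m, ~ m 1, I `<=` m &
                forall c, ~ m c -> exists s, m (s * c - 1)].
Proof.
move=> idI nI1.
pose Q (J : R -> Prop) := is_ideal J /\ ~ J 1.
have Qchain F : F `<=` Q -> total_on F subset -> F !=set0 -> Q (\bigcup_(J in F) J).
  move=> FQ Ftot F0; split; first by apply: is_ideal_bigcup => // J /FQ[].
  by case=> J /FQ[_ nJ1].
have [m [[idm nm1] Im mmax]] := zorn_above (conj idI nI1) Qchain.
exists m; split => // c nmc.
have [[a [s [ma e1]]]|nmc1] := pselect (exists a s, m a /\ 1 = a + s * c).
  exists s; have -> : s * c - 1 = - 1 * a by rewrite mulN1r e1 opprD addrCA subrr addr0.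
  by case: idm => _ _; apply.
exfalso; apply: nmc; apply: (mmax _ _ (conj (is_ideal_addMr c idm) _)).
- by move=> t mt; exists t, 0; rewrite mul0r addr0.
- by move=> [a [s [ma e1]]]; apply: nmc1; exists a, s.
- by exists 0, 1; rewrite mul1r add0r; split => //; case: idm.
Qed.

End Ideals.

Section Submodules.
Variables (R : comPzRingType) (M : lmodType R).
Implicit Types (N K L S V D : msub M) (x y : M).

Lemma nonzero_msubP N : ~ zero_msub N -> exists x, N x /\ x <> 0.
Proof.
move=> nzN; apply: contrapT => noN; apply: nzN => x Nx.
by apply: contrapT => nx; apply: noN; exists x.
Qed.

Lemma submod0 N : is_submodule N -> N 0.
Proof. by case. Qed.

Lemma submodZ N r x : is_submodule N -> N x -> N (r *: x).
Proof. by case=> _ _; apply. Qed.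

Lemma submodD N x y : is_submodule N -> N x -> N y -> N (x + y).
Proof. by case=> _ + _; apply. Qed.

Lemma submodN N x : is_submodule N -> N x -> N (- x).
Proof. by rewrite -scaleN1r; exact: submodZ. Qed.

Lemma is_submodule0 : is_submodule [set 0 : M].
Proof. by split => [|x y -> ->|r x ->]; rewrite ?addr0 ?scaler0. Qed.

Lemma is_submoduleI N K :
  is_submodule N -> is_submodule K -> is_submodule (N `&` K).
Proof.
move=> sN sK; split; first by split; exact: submod0.
- by move=> x y [Nx Kx] [Ny Ky]; split; exact: submodD.
- by move=> r x [Nx Kx]; split; exact: submodZ.
Qed.

Lemma is_submodule_msum N K :
  is_submodule N -> is_submodule K -> is_submodule (msum N K).
Proof.
move=> sN sK; split.
- by exists 0, 0; rewrite addr0; do !split; exact: submod0.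
- move=> _ _ [n [k [Nn [Kk ->]]]] [n' [k' [Nn' [Kk' ->]]]].
  by exists (n + n'), (k + k'); rewrite addrACA; do !split; exact: submodD.
- move=> r _ [n [k [Nn [Kk ->]]]].
  by exists (r *: n), (r *: k); rewrite scalerDr; do !split; exact: submodZ.
Qed.

Lemma is_submodule_bigcup (F : set (msub M)) :
  F `<=` @is_submodule R M -> total_on F subset -> F !=set0 ->
  is_submodule (\bigcup_(N in F) N).
Proof.
move=> FS Ftot [K FK]; split.
- by exists K => //; exact: submod0 (FS K FK).
- move=> x y [N FN Nx] [K' FK' Ky].
  have [NK|KN] := Ftot N K' FN FK'.
  + by exists K' => //; apply: submodD (FS K' FK') (NK x Nx) Ky.
  + by exists N => //; apply: submodD (FS N FN) Nx (KN y Ky).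
- by move=> r x [N FN Nx]; exists N => //; exact: submodZ (FS N FN) Nx.
Qed.

Lemma msum_le V S : is_submodule V -> msub_le S V -> msub_le (msum V S) V.
Proof. by move=> sV SV _ [v [s [Vv [Ss ->]]]]; apply: submodD (SV s Ss). Qed.

Lemma large_le N K : large N -> msub_le N K -> large K.
Proof.
move=> lN NK L sL nzL; have [x [nx [Nx Lx]]] := lN L sL nzL.
by exists x; do !split => //; exact: NK.
Qed.

Lemma not_largeP N :
  ~ large N -> exists L, [/\ is_submodule L, ~ zero_msub L & zero_msub (N `&` L)].
Proof.
move=> nlN; apply: contrapT => noL; apply: nlN => L sL nzL.
apply: contrapT => nmeet; apply: noL; exists L; split => // x [Nx Lx].
by apply: contrapT => nx; apply: nmeet; exists x.
Qed.

Lemma ex_large_complement D :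
  is_submodule D ->
  exists V, [/\ is_submodule V, zero_msub (V `&` D) & large (msum V D)].
Proof.
move=> sD.
pose Q (V : msub M) := is_submodule V /\ zero_msub (V `&` D).
have Qchain F : F `<=` Q -> total_on F subset -> F !=set0 -> Q (\bigcup_(V in F) V).
  move=> FQ Ftot F0; split; first by apply: is_submodule_bigcup => // V /FQ[].
  by move=> x [[V /FQ[_ VD] Vx] Dx]; exact: VD.
have Q0 : Q [set 0] by split; [exact: is_submodule0|move=> x []].
have [V [[sV VD] _ Vmax]] := zorn_above Q0 Qchain.
exists V; split => // L sL nzL; apply: contrapT => nmeet.
have VDL : zero_msub (msum V D `&` L).
  by move=> x [VDx Lx]; apply: contrapT => nx; apply: nmeet; exists x.
have VLD : zero_msub (msum V L `&` D).
  move=> _ [[v [l [Vv [Ll ->]]]] Dvl].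
  have l0 : l = 0.
    apply: VDL; split => //; exists (- v), (v + l).
    by rewrite addKr; do !split => //; exact: submodN.
  by move: Dvl; rewrite l0 addr0 => Dv; exact: VD.
have VLV : msub_le (msum V L) V.
  apply: Vmax; last by split => //; exact: is_submodule_msum.
  by move=> v Vv; exists v, 0; rewrite addr0; do !split => //; exact: submod0.
have [x [Lx nx]] := nonzero_msubP nzL.
have Vx : V x by apply: VLV; exists 0, x; rewrite add0r; do !split => //; exact: submod0.
apply: nx; apply: VDL; split => //; exists x, 0; rewrite addr0.
by do !split => //; exact: submod0.
Qed.

Lemma vertex_complement D :
  lsg_vertex D -> exists V, [/\ lsg_vertex V, ~ msub_eq V D & large (msum V D)].
Proof.
case=> sD nzD nlD; have [V [sV VD lVD]] := ex_large_complement sD.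
have [x [Dx nx]] := nonzero_msubP nzD.
exists V; split => //; first split => //.
- move=> zV; apply: nlD; apply: large_le lVD _ => _ [v [d [Vv [Dd ->]]]].
  by rewrite (zV v Vv) add0r.
- by move=> lV; have [y [ny [Vy Dy]]] := lV D sD nzD; apply: ny; exact: VD.
- by move=> eVD; apply: nx; apply: VD; split => //; exact/eVD.
Qed.

Lemma lsg_dominating_size_ge2 N (C : seq (msub M)) :
  lsg_vertex N -> lsg_dominating C -> (2 <= size C)%N.
Proof.
move=> vN [Cv Cd]; case: C Cv Cd => [|D [|D' C]] Cv Cd //.
  by have [X []] := Cd N vN.
have [V [vV nVD lVD]] := vertex_complement (Cv D (or_introl erefl)).
by have [X /= [<-|[]] [eVD|[_ _ _ nlVD]]] := Cd V vV.
Qed.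

Definition cyclic_msub y : msub M := fun z => exists c, z = c *: y.

Lemma is_submodule_cyclic y : is_submodule (cyclic_msub y).
Proof.
split; first by exists 0; rewrite scale0r.
- by move=> _ _ [a ->] [b ->]; exists (a + b); rewrite scalerDl.
- by move=> c _ [a ->]; exists (c * a); rewrite scalerA.
Qed.

Lemma minimal_cyclic y :
  y <> 0 -> (forall c, c *: y <> 0 -> exists s, s *: (c *: y) = y) ->
  minimal_submodule (cyclic_msub y).
Proof.
move=> ny gen; split; first exact: is_submodule_cyclic.
  by move=> zy; apply: ny; apply: zy; exists 1; rewrite scale1r.
move=> K sK Ky; have [|/nonzero_msubP[z [Kz nz]]] := pselect (zero_msub K).
  by left.
right; have [c ez] := Ky z Kz; rewrite ez in Kz nz.
have [s sy] := gen c nz.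
have Ky' : K y by rewrite -sy; exact: submodZ.
by move=> u; split=> [/Ky //|[a ->]]; exact: submodZ.
Qed.

Lemma is_ideal_ann x : is_ideal (fun r => r *: x = 0).
Proof.
split; first by rewrite scale0r.
- by move=> a b ax bx; rewrite scalerDl ax bx addr0.
- by move=> r a ax; rewrite -scalerA ax scaler0.
Qed.

Lemma is_submodule_ideal_scale (m : R -> Prop) x :
  is_ideal m -> is_submodule (fun z => exists2 a, m a & z = a *: x).
Proof.
case=> m0 mD mM; split; first by exists 0; rewrite ?scale0r.
- by move=> _ _ [a ma ->] [b mb ->]; exists (a + b); [exact: mD|rewrite scalerDl].
- by move=> r _ [a ma ->]; exists (r * a); [exact: mM|rewrite scalerA].
Qed.

Section Comultiplication.
Hypothesis comultM : comultiplication_module M.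

Lemma comult_separate N x :
  is_submodule N -> ~ N x ->
  exists a, (forall n, N n -> a *: n = 0) /\ a *: x <> 0.
Proof.
move=> sN nNx; have [I [_ NI]] := comultM sN.
apply: contrapT => noa; apply: nNx; apply/NI => r Ir.
apply: contrapT => nrx; apply: noa; exists r; split => // n /NI; exact.
Qed.

Lemma zero_msub_meet_msum S V N :
  is_submodule S -> is_submodule V -> is_submodule N ->
  zero_msub (S `&` N) -> zero_msub (S `&` V) -> zero_msub (S `&` msum V N).
Proof.
move=> sS sV sN SN SV x [Sx [v [n [Vv [Nn ex]]]]]; apply: contrapT => nx.
have nNx : ~ N x by move=> Nx; apply: nx; exact: SN.
have [a [aN nax]] := comult_separate sN nNx.
apply: nax; apply: SV; split; first exact: submodZ.
by rewrite ex scalerDr (aN n Nn) addr0; exact: submodZ.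
Qed.

Lemma ex_minimal_le N :
  is_submodule N -> ~ zero_msub N ->
  exists S, minimal_submodule S /\ msub_le S N.
Proof.
move=> sN /nonzero_msubP[x [Nx nx]].
have x_ann1 : 1 *: x <> 0 by rewrite scale1r.
have [m [idm nm1 annm mmax]] := ex_maximal_ideal_above (is_ideal_ann x) x_ann1.
pose mx z := exists2 a, m a & z = a *: x.
have nmx_x : ~ mx x.
  case=> a ma xa; apply: nm1; rewrite -(subrK a 1).
  case: idm => _ + _; apply => //; apply: annm.
  by rewrite /= scalerBl scale1r -xa subrr.
have [r [rmx nrx]] := comult_separate (is_submodule_ideal_scale x idm) nmx_x.
have m_rx a : m a -> a *: (r *: x) = 0.
  by move=> ma; rewrite scalerA mulrC -scalerA; apply: rmx; exists a.
exists (cyclic_msub (r *: x)); split; last first.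
  by move=> _ [c ->]; apply: submodZ; last apply: submodZ.
apply: minimal_cyclic => // c ncrx.
have [s msc] : exists s, m (s * c - 1).
  by apply: mmax => mc; apply: ncrx; exact: m_rx.
by exists s; rewrite scalerA -[s * c](subrK 1) scalerDl m_rx // add0r scale1r.
Qed.

Lemma lsg_dominating_vertex_minimal N S :
  lsg_vertex N -> minimal_submodule S -> zero_msub (S `&` N) ->
  lsg_dominating [:: N; S].
Proof.
move=> vN minS SN; have [sS nzS Smin] := minS; have [sN nzN _] := vN.
have vS : lsg_vertex S.
  split => // lS; have [x [nx [Sx Nx]]] := lS N sN nzN.
  by apply: nx; exact: SN.
split; first by move=> X /= [<-|[<-|[]]].
move=> V vV; have [sV _ nlV] := vV.
have [eVN|nVN] := pselect (msub_eq V N); first by exists N; [left|left].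
have [eVS|nVS] := pselect (msub_eq V S); first by exists S; [right; left|left].
have [lVN|nlVN] := pselect (large (msum V N)); last by exists N; [left|right].
have [lVS|nlVS] := pselect (large (msum V S)); last by exists S; [right; left|right].
exfalso; apply: nlV; apply: large_le lVS _.
have nzSV : ~ zero_msub (S `&` V).
  move=> SV; have [x [nx [VNx Sx]]] := lVN S sS nzS.
  by apply: nx; apply: (zero_msub_meet_msum sS sV sN SN SV).
have [//|eSV] := Smin _ (is_submoduleI sS sV) (@subIsetl _ S V).
by apply: msum_le => // x /eSV[].
Qed.

Lemma lsg_gamma_le2 : lsg_nonnull M -> lsg_gamma_le M 2.
Proof.
move=> [N [_ [vN _ _ _]]]; have [_ _ nlN] := vN.
have [L [sL nzL NL]] := not_largeP nlN.
have [S [minS SL]] := ex_minimal_le sL nzL.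
exists [:: N; S]; split => //; apply: lsg_dominating_vertex_minimal => // x [Sx Nx].
by apply: NL; split => //; exact: SL.
Qed.

End Comultiplication.
End Submodules.

Theorem theorem3p3 (R : comPzRingType) (M : lmodType R) :
  nonzero_module M -> comultiplication_module M -> lsg_nonnull M ->
  lsg_gamma_le M 2 /\ (Min_finite M -> lsg_gamma_eq M 2).
Proof.
(* M <> 0 follows from the edge, and the lower bound needs no finiteness of
   Min(M): every vertex has a complement that it does not dominate. *)
move=> _ comultM nonnull; have gamma_le2 := lsg_gamma_le2 comultM nonnull.
split => // _; split => // C.
have [N [_ [vN _ _ _]]] := nonnull.
exact: lsg_dominating_size_ge2 vN.
Qed.
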